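(* Suppose Assumption A and Assumption B (defined in the context) hold for the dynamic accuracy DFO algorithm described in the context, whose criticality parameter satisfies $\epsilon\in(0,1)$. Suppose $\|\nabla f(\theta^k)\|\ge\epsilon$ for all $k=0,\ldots,k_\epsilon$. Then for all $k\le k_\epsilon$, $$\Delta^k\ge\Delta_{\min}:=\gamma_{\rm dec}\min\left(\Delta^0,\frac{c_0\epsilon}{\kappa_{\rm eg}+1},\frac{\gamma_{\rm dec}\epsilon}{\kappa_{\rm eg}+1}\right)>0,$$ where $c_0:=\min\left(\frac{1-\eta_2-2\eta_1'}{4\kappa_{\rm ef}},\frac{1}{\kappa_H}\right)$.
   Context: Setting. Let $n,d\ge 1$ and $r=(r_1,\ldots,r_n):\mathbb{R}^d\to\mathbb{R}^n$, with objective $f(\theta)=\frac1n\|r(\theta)\|^2=\frac1n\sum_{i=1}^n r_i(\theta)^2$ (Euclidean norm). In the application, $r_i(\theta)=\|\hat x_i(\theta)-x_i\|$ where $\hat x_i(\theta)$ is the minimizer of a lower-level problem that can only be computed approximately. The algorithm never sees $r$ exactly: for any $\theta$ it can compute an approximation $\tilde r(\theta)$ (in the application $\tilde r_i(\theta)=\|\tilde x_i(\theta)-x_i\|$ with $\tilde x_i(\theta)$ an approximate minimizer whose error can be made as small as desired), and sets $\tilde f(\theta)=\frac1n\|\tilde r(\theta)\|^2$. We say $\tilde f(\theta)$ is evaluated with accuracy $\delta$ if $|\tilde f(\theta)-f(\theta)|\le\delta$. Models. At iteration $k$ the algorithm holds an iterate $\theta^k$, a radius $\Delta^k>0$ (here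 $\Delta^k$ denotes its value after the criticality and accuracy phases of iteration $k$), and interpolation points $z^0=\theta^k,z^1,\ldots,z^d\in\mathbb{R}^d$ with $z^1-\theta^k,\ldots,z^d-\theta^k$ linearly independent; $J^k\in\mathbb{R}^{n\times d}$ is the unique matrix with $\tilde r(\theta^k)+J^k(z^t-\theta^k)=\tilde r(z^t)$ for $t=1,\ldots,d$. Set $M^k(s)=\tilde r(\theta^k)+J^k s$ and $m^k(s)=\frac1n\|M^k(s)\|^2=\tilde f(\theta^k)+(g^k)^Ts+\frac12 s^TH^ks$ with $g^k=\frac2n (J^k)^T\tilde r(\theta^k)$, $H^k=\frac2n(J^k)^TJ^k$. Fixed constants $\kappa_{\rm ef},\kappa_{\rm eg}>0$ (independent of $k,\theta^k,\Delta^k$) are given, and $m^k$ is called fully linear in $B(\theta^k,\Delta^k)$ if $|f(\theta^k+s)-m^k(s)|\le\kappa_{\rm ef}(\Delta^k)^2$ and $\|\nabla f(\theta^k+s)-\nabla m^k(s)\|\le\kappa_{\rm eg}\Delta^k$ for all $\|s\|\le\Delta^k$. The algorithm has a procedure which, by replacing interpolation points, makes the model fully linear in a given ball. Algorithm. Parameters: $\Delta_{\max}>0$, $0<\gamma_{\rm dec}<1<\gamma_{\rm inc}$, $0<\eta_1\le\eta_2<1$, $0<\eta_1'<\min(\eta_1,1-\eta_2)/2$, $\epsilon>0$; inputs $\theta^0\in\mathbb{R}^d$, $0<\Delta^0\le\Delta_{\max}$. Build an initial model $m^0$ from an arbitrary interpolation set. For $k=0,1,2,\ldots$: (1) [accuracy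 phase] repeat: (a) except on the first pass, re-evaluate $\tilde f(\theta^k)$ with accuracy $\delta^k\le\eta_1'[m^k(0)-m^k(s^k)]$ using the $s^k$ from the previous pass; (b) [criticality phase] if $\|g^k\|\le\epsilon$, replace $\Delta^k$ by $\gamma_{\rm dec}^i\Delta^k$ for $i=0,1,2,\ldots$ (making the model fully linear in the current ball) until $m^k$ is fully linear in $B(\theta^k,\Delta^k)$ and $\Delta^k\le\|g^k\|$; (c) compute $s^k$ with $\|s^k\|\le\Delta^k$ approximately minimizing $m^k$ over that ball; until $\tilde f(\theta^k)$ has been evaluated with accuracy $\delta^k\le\eta_1'[m^k(0)-m^k(s^k)]$. (2) Evaluate $\tilde f(\theta^k+s^k)$ with accuracy $\delta^k_+\le\eta_1'[m^k(0)-m^k(s^k)]$ and set $\tilde\rho^k=\frac{\tilde f(\theta^k)-\tilde f(\theta^k+s^k)}{m^k(0)-m^k(s^k)}$. (3) Set $\theta^{k+1}=\theta^k+s^k$ if $\tilde\rho^k\ge\eta_2$, or if $\tilde\rho^k\ge\eta_1$ and $m^k$ is fully linear in $B(\theta^k,\Delta^k)$; otherwise $\theta^{k+1}=\theta^k$. Set $\Delta^{k+1}=\min(\gamma_{\rm inc}\Delta^k,\Delta_{\max})$ if $\tilde\rho^k\ge\eta_2$; $\Delta^{k+1}=\Delta^k$ if $\tilde\rho^k<\eta_2$ and $m^k$ is not fully linear in $B(\theta^k,\Delta^k)$; $\Delta^{k+1}=\gamma_{\rm dec}\Delta^k$ otherwise. (4) If $\theta^{k+1}=\theta^k+s^k$,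 form $m^{k+1}$ by adding $\theta^{k+1}$ to the interpolation set (removing an existing point); otherwise set $m^{k+1}=m^k$ if $m^k$ is fully linear in $B(\theta^k,\Delta^k)$, else form $m^{k+1}$ by making $m^k$ fully linear in $B(\theta^{k+1},\Delta^{k+1})$. Assumption A: the set $\mathcal{B}=\{z: \|z-\theta\|\le\Delta_{\max}\text{ for some }\theta\text{ with }f(\theta)\le f(\theta^0)\}$ is bounded, and $r$ is continuously differentiable on $\mathcal{B}$ with $\partial r$ Lipschitz continuous with constant $L_J$ on $\mathcal{B}$. Assumption B: for all $k$, $m^k(0)-m^k(s^k)\ge\frac12\|g^k\|\min\left(\Delta^k,\frac{\|g^k\|}{\|H^k\|+1}\right)$, and there is $\kappa_H\ge1$ with $\|H^k\|+1\le\kappa_H$ for all $k$. *)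

From mathcomp Require Import all_boot all_order all_algebra.
From mathcomp Require Import all_classical all_reals all_analysis.
Import Order.TTheory GRing.Theory Num.Theory.
Set Implicit Arguments. Unset Strict Implicit. Unset Printing Implicit Defensive.
Local Open Scope ring_scope.

Definition enorm (R : realType) (m : nat) (v : 'cV[R]_m) : R :=
  Num.sqrt (\sum_(i < m) (v i 0) ^+ 2).

(* Frobenius norm of a matrix (used only for the Lipschitz constant of the
   Jacobian in Assumption A; all norms are equivalent in finite dimension). *)
Definition fnorm (R : realType) (m p : nat) (A : 'M[R]_(m, p)) : R :=
  Num.sqrt (\sum_(i < m) \sum_(j < p) (A i j) ^+ 2).

Definition opnorm (R : realType) (m p : nat) (A : 'M[R]_(m, p)) : R :=
  sup [set y : R | exists v : 'cV[R]_p, enorm v <= 1 /\ y = enorm (A *m v)].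

Definition grad (R : realType) (d : nat) (F : 'cV[R]_d -> R) (x : 'cV[R]_d)
  : 'cV[R]_d := \col_(j < d) ('D_(delta_mx j 0) F x).

Definition jac (R : realType) (n d : nat) (r : 'cV[R]_d -> 'cV[R]_n)
  (x : 'cV[R]_d) : 'M[R]_(n, d) :=
  \matrix_(i < n, j < d) (('D_(delta_mx j 0) r x) i 0).

(* f(theta) = (1/n) ||r(theta)||^2 ; also used for ftilde from rtilde. *)
Definition sqobj (R : realType) (n : nat) (c : 'cV[R]_n) : R :=
  (n%:R)^-1 * enorm c ^+ 2.
Definition fobj (R : realType) (n d : nat) (r : 'cV[R]_d -> 'cV[R]_n)
  (th : 'cV[R]_d) : R := sqobj (r th).

(* The interpolation model.  c = rtilde(theta^k); the columns of Z are the
   interpolation points z^1..z^d and the columns of V the values rtilde(z^t).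
   When the displacements z^t - theta are linearly independent
   ((Z - theta 1^T) invertible), J below is the unique matrix with
   c + J (z^t - theta) = rtilde(z^t), t = 1..d. *)
Definition ones_row (R : realType) (d : nat) : 'rV[R]_d := const_mx 1.
Definition interp_ok (R : realType) (d : nat) (th : 'cV[R]_d) (Z : 'M[R]_d) :=
  (Z - th *m ones_row R d) \in unitmx.
Definition Jint (R : realType) (n d : nat) (th : 'cV[R]_d) (c : 'cV[R]_n)
  (Z : 'M[R]_d) (V : 'M[R]_(n, d)) : 'M[R]_(n, d) :=
  (V - c *m ones_row R d) *m invmx (Z - th *m ones_row R d).

Definition mval (R : realType) (n d : nat) (c : 'cV[R]_n) (J : 'M[R]_(n, d))
  (s : 'cV[R]_d) : R := sqobj (c + J *m s).
Definition gvec (R : realType) (n d : nat) (c : 'cV[R]_n) (J : 'M[R]_(n, d))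
  : 'cV[R]_d := (2 / n%:R) *: (J^T *m c).
Definition Hmat (R : realType) (n d : nat) (J : 'M[R]_(n, d)) : 'M[R]_d :=
  (2 / n%:R) *: (J^T *m J).
Definition mgrad (R : realType) (n d : nat) (c : 'cV[R]_n) (J : 'M[R]_(n, d))
  (s : 'cV[R]_d) : 'cV[R]_d := gvec c J + Hmat J *m s.

Definition fully_linear (R : realType) (n d : nat) (r : 'cV[R]_d -> 'cV[R]_n)
  (kef keg : R) (th : 'cV[R]_d) (D : R) (c : 'cV[R]_n) (J : 'M[R]_(n, d)) :=
  forall s : 'cV[R]_d, enorm s <= D ->
    `| fobj r (th + s) - mval c J s | <= kef * D ^+ 2 /\
    enorm (grad (fobj r) (th + s) - mgrad c J s) <= keg * D.

(* A trace (run) of the algorithm.  k = outer iteration, p = pass of the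
   accuracy-phase loop of iteration k, i = index of the criticality loop. *)
Record trace (R : realType) (n d : nat) := Trace {
  th : nat -> 'cV[R]_d;
  Dst : nat -> R;                    (* radius at the start of iteration k *)
  np : nat -> nat;                   (* number of passes of the accuracy loop *)
  cv : nat -> nat -> 'cV[R]_n;       (* rtilde(theta^k) in use during pass p *)
  acc : nat -> nat -> R;             (* accuracy with which ftilde(theta^k)
                                        has been evaluated, during pass p *)
  Z0 : nat -> nat -> 'M[R]_d;        (* interpolation points at start of pass p *)
  V0 : nat -> nat -> 'M[R]_(n, d);   (* their rtilde values *)
  ni : nat -> nat -> nat;            (* final i of the criticality loop *)
  Zc : nat -> nat -> nat -> 'M[R]_d; (* points after making the model fully
                                        linear in the ball of index i *)
  Vc : nat -> nat -> nat -> 'M[R]_(n, d);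
  st : nat -> nat -> 'cV[R]_d;       (* step s^k computed in pass p *)
  cplus : nat -> 'cV[R]_n;           (* rtilde(theta^k + s^k) *)
  accplus : nat -> R                 (* its accuracy delta^k_+ *)
}.

Section Derived.
Variables (R : realType) (n d : nat) (eps gdec : R) (tr : trace R n d).

Definition J0 k p := Jint (th tr k) (cv tr k p) (Z0 tr k p) (V0 tr k p).
Definition Jc k p i := Jint (th tr k) (cv tr k p) (Zc tr k p i) (Vc tr k p i).
Definition crit k p : bool := enorm (gvec (cv tr k p) (J0 k p)) <= eps.
Fixpoint Dafter k p : R :=
  let D := match p with 0 => Dst tr k | p'.+1 => Dafter k p' end in
  if crit k p then gdec ^+ (ni tr k p) * D else D.
Definition Din k p : R := match p with 0 => Dst tr k | p'.+1 => Dafter k p' end.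
(* model after criticality in pass p *)
Definition Zf k p := if crit k p then Zc tr k p (ni tr k p) else Z0 tr k p.
Definition Vf k p := if crit k p then Vc tr k p (ni tr k p) else V0 tr k p.
Definition Jf k p := Jint (th tr k) (cv tr k p) (Zf k p) (Vf k p).
Definition dec k p := mval (cv tr k p) (Jf k p) 0 - mval (cv tr k p) (Jf k p) (st tr k p).
Definition fp k := (np tr k).-1.
Definition Delta k := Dafter k (fp k).
Definition ck k := cv tr k (fp k).
Definition Jk k := Jf k (fp k).
Definition sk k := st tr k (fp k).
Definition deck k := dec k (fp k).
Definition rho k := (sqobj (ck k) - sqobj (cplus tr k)) / deck k.
End Derived.

Definition FLk (R : realType) (n d : nat) (r : 'cV[R]_d -> 'cV[R]_n)
  (kef keg eps gdec : R) (tr : trace R n d) (k : nat) : Prop :=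
  fully_linear r kef keg (th tr k) (Delta eps gdec tr k) (ck tr k) (Jk eps tr k).
Definition succ (R : realType) (n d : nat) (r : 'cV[R]_d -> 'cV[R]_n)
  (kef keg eta1 eta2 eps gdec : R) (tr : trace R n d) (k : nat) : Prop :=
  eta2 <= rho eps tr k \/ (eta1 <= rho eps tr k /\ FLk r kef keg eps gdec tr k).

Definition is_run (R : realType) (n d : nat) (r : 'cV[R]_d -> 'cV[R]_n)
  (kef keg Dmax gdec ginc eta1 eta2 eta1' eps : R) (th0 : 'cV[R]_d) (D0 : R)
  (tr : trace R n d) : Prop :=
  let FL := fully_linear r kef keg in
  [/\
   [/\ th tr 0 = th0, Dst tr 0 = D0 &
       (* initial model: arbitrary interpolation set *)
       interp_ok (th tr 0) (Z0 tr 0 0)],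
   forall k, (0 < np tr k)%N /\
   (forall p, (p < np tr k)%N ->
     [/\ `| sqobj (cv tr k p) - fobj r (th tr k) | <= acc tr k p,
         (* (a) re-evaluation on passes p > 0, model rebuilt with same points *)
         (0 < p)%N -> [/\ acc tr k p <= eta1' * dec eps tr k p.-1,
                         Z0 tr k p = Zf eps tr k p.-1 &
                         V0 tr k p = Vf eps tr k p.-1],
         crit eps tr k p ->
           [/\ forall i, (i <= ni tr k p)%N ->
                  interp_ok (th tr k) (Zc tr k p i) /\
                  FL (th tr k) (gdec ^+ i * Din eps gdec tr k p)
                     (cv tr k p) (Jc tr k p i),
               forall i, (i < ni tr k p)%N ->
                  ~ (gdec ^+ i * Din eps gdec tr k p
                       <= enorm (gvec (cv tr k p) (Jc tr k p i))) &
               gdec ^+ (ni tr k p) * Din eps gdec tr k p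
                 <= enorm (gvec (cv tr k p) (Jc tr k p (ni tr k p)))],
         enorm (st tr k p) <= Dafter eps gdec tr k p &
         (* loop exit test: exits at the first pass where it holds *)
         (acc tr k p <= eta1' * dec eps tr k p <-> p = fp tr k)]),
   forall k, `| sqobj (cplus tr k) - fobj r (th tr k + sk tr k) | <= accplus tr k
           /\ accplus tr k <= eta1' * deck eps tr k,
   forall k,
     let FLk := FLk r kef keg eps gdec tr k in
     let rk := rho eps tr k in
     let succk := succ r kef keg eta1 eta2 eps gdec tr k in
     [/\ succk -> th tr k.+1 = th tr k + sk tr k,
         ~ succk -> th tr k.+1 = th tr k,
         eta2 <= rk -> Dst tr k.+1 = Num.min (ginc * Delta eps gdec tr k) Dmax,
         rk < eta2 -> ~ FLk -> Dst tr k.+1 = Delta eps gdec tr k &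
         rk < eta2 -> FLk -> Dst tr k.+1 = gdec * Delta eps gdec tr k] &
   forall k,
     let FLk := FLk r kef keg eps gdec tr k in
     let succk := succ r kef keg eta1 eta2 eps gdec tr k in
     [/\ succk ->
           [/\ cv tr k.+1 0 = cplus tr k, acc tr k.+1 0 = accplus tr k,
               interp_ok (th tr k.+1) (Z0 tr k.+1 0) &
               exists j : 'I_(1 + d),
                 Z0 tr k.+1 0 = \matrix_(i < d, t < d)
                     (row_mx (th tr k) (Zf eps tr k (fp tr k))) i (lift j t) /\
                 V0 tr k.+1 0 = \matrix_(i < n, t < d)
                     (row_mx (ck tr k) (Vf eps tr k (fp tr k))) i (lift j t)],
         ~ succk -> FLk ->
           [/\ cv tr k.+1 0 = ck tr k, acc tr k.+1 0 = acc tr k (fp tr k),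
               Z0 tr k.+1 0 = Zf eps tr k (fp tr k) &
               V0 tr k.+1 0 = Vf eps tr k (fp tr k)] &
         ~ succk -> ~ FLk ->
           [/\ cv tr k.+1 0 = ck tr k, acc tr k.+1 0 = acc tr k (fp tr k),
               interp_ok (th tr k.+1) (Z0 tr k.+1 0) &
               FL (th tr k.+1) (Dst tr k.+1) (cv tr k.+1 0)
                  (Jint (th tr k.+1) (cv tr k.+1 0) (Z0 tr k.+1 0) (V0 tr k.+1 0))]]
  ].

Definition diffat (R : realType) (V W : normedModType R) (f : V -> W) (x : V) :=
  differentiable f x.

Definition Bset (R : realType) (n d : nat) (r : 'cV[R]_d -> 'cV[R]_n)
  (th0 : 'cV[R]_d) (Dmax : R) (z : 'cV[R]_d) : Prop :=
  exists th, fobj r th <= fobj r th0 /\ enorm (z - th) <= Dmax.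

Definition assumptionA (R : realType) (n d : nat) (r : 'cV[R]_d -> 'cV[R]_n)
  (th0 : 'cV[R]_d) (Dmax : R) : Prop :=
  (exists M : R, forall z, Bset r th0 Dmax z -> enorm z <= M) /\
  (forall z, Bset r th0 Dmax z -> @diffat R _ _ r z) /\
  (exists LJ : R, forall x y, Bset r th0 Dmax x -> Bset r th0 Dmax y ->
      fnorm (jac r x - jac r y) <= LJ * enorm (x - y)).

Definition assumptionB (R : realType) (n d : nat) (eps gdec kH : R)
  (tr : trace R n d) : Prop :=
  1 <= kH /\
  forall k p, (p < np tr k)%N ->
    let c := cv tr k p in let J := Jf eps tr k p in
    let g := enorm (gvec c J) in
    dec eps tr k p >= 2^-1 * g * Num.min (Dafter eps gdec tr k p)
                                     (g / (opnorm (Hmat J) + 1)) /\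
    opnorm (Hmat J) + 1 <= kH.

From mathcomp Require Import all_boot all_order all_algebra.
From mathcomp Require Import all_classical all_reals all_analysis.
From mathcomp Require Import lra ring.
Import Order.TTheory GRing.Theory Num.Theory.
Set Implicit Arguments. Unset Strict Implicit. Unset Printing Implicit Defensive.
Local Open Scope ring_scope.

(* The radius Delta^k shrinks in two places only. In the criticality phase the
   loop shrinks a radius D by gdec only while D exceeds the model gradient g of
   a model fully linear in B(theta^k, D); then
   eps <= |grad f(theta^k)| <= g + keg D < (keg + 1) D, so the new radius is at
   least gdec eps / (keg + 1). In step 3 the radius shrinks only after an
   unsuccessful iteration with a fully linear model. If there Delta <= c0 g, the
   Cauchy decrease g Delta / 2 dominates both the model error kef Delta^2 and
   the evaluation error, which forces rho >= eta2; combined with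
   eps <= g + keg Delta this shows Delta > c0 eps / (keg + 1) before shrinking. *)

Lemma cauchy_schwarz_sum (R : realFieldType) (m : nat) (a b : 'I_m -> R) :
  (\sum_i a i * b i) ^+ 2 <= (\sum_i a i ^+ 2) * (\sum_i b i ^+ 2).
Proof.
set A := \sum_i a i ^+ 2; set B := \sum_i b i ^+ 2; set C := \sum_i a i * b i.
have B0 : 0 <= B by apply: sumr_ge0 => i _; exact: sqr_ge0.
have [Bz|Bp] := eqVneq B 0.
  have b0 i : b i = 0.
    apply/eqP; rewrite -sqrf_eq0; apply/eqP.
    apply: (psumr_eq0P (P := predT) (F := fun i => b i ^+ 2)) => // j _.
    exact: sqr_ge0.
  by rewrite /C big1 ?Bz ?expr0n ?mulr0 // => i _; rewrite b0 mulr0.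
(* 0 <= sum_i (B a_i - C b_i)^2 = B (A B - C^2) *)
have : 0 <= \sum_i (B * a i - C * b i) ^+ 2 by apply: sumr_ge0 => i _; exact: sqr_ge0.
have -> : \sum_i (B * a i - C * b i) ^+ 2 = B * (A * B - C ^+ 2).
  rewrite (eq_bigr (fun i => B ^+ 2 * a i ^+ 2 - (2 * B * C) * (a i * b i)
                             + C ^+ 2 * b i ^+ 2)); last by move=> i _; ring.
  by rewrite !big_split /= sumrN -!mulr_sumr -/A -/B -/C; ring.
by rewrite pmulr_rge0 ?subr_ge0 // lt_def Bp B0.
Qed.

Lemma enormD_le (R : realType) (m : nat) (u v : 'cV[R]_m) :
  enorm (u + v) <= enorm u + enorm v.
Proof.
rewrite /enorm; set A := \sum_i u i 0 ^+ 2; set B := \sum_i v i 0 ^+ 2.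
have A0 : 0 <= A by apply: sumr_ge0 => i _; exact: sqr_ge0.
have B0 : 0 <= B by apply: sumr_ge0 => i _; exact: sqr_ge0.
set C := \sum_i u i 0 * v i 0.
have CAB : C <= Num.sqrt A * Num.sqrt B.
  rewrite -sqrtrM // (le_trans (ler_norm C)) // -sqrtr_sqr ler_sqrt ?mulr_ge0 //.
  exact: cauchy_schwarz_sum.
have -> : \sum_i (u + v) i 0 ^+ 2 = A + 2 * C + B.
  rewrite /A /B /C mulr_sumr -!big_split /=; apply: eq_bigr => i _.
  by rewrite !mxE; ring.
rewrite -[leRHS]ger0_norm ?addr_ge0 ?sqrtr_ge0 // -sqrtr_sqr ler_sqrt ?sqr_ge0 //.
by rewrite sqrrD !sqr_sqrtr // lerD2r lerD2l mulr2n; lra.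
Qed.

Lemma enorm0 (R : realType) (m : nat) : enorm (0 : 'cV[R]_m) = 0.
Proof. by rewrite /enorm big1 ?sqrtr0 // => i _; rewrite mxE expr0n. Qed.

Lemma opnorm_ge0 (R : realType) (m p : nat) (A : 'M[R]_(m, p)) : 0 <= opnorm A.
Proof.
rewrite /opnorm; set S := (X in sup X).
have S0 : S 0 by exists 0; rewrite mulmx0 !enorm0.
by case: (pselect (has_sup S)) => [/sup_upper_bound/(_ _ S0) //|/sup_out ->].
Qed.

Lemma fully_linear_grad_le (R : realType) (n d : nat) (r : 'cV[R]_d -> 'cV[R]_n)
    (kef keg : R) (th : 'cV[R]_d) (D : R) (c : 'cV[R]_n) (J : 'M[R]_(n, d)) :
  0 <= D -> fully_linear r kef keg th D c J ->
  enorm (grad (fobj r) th) <= enorm (gvec c J) + keg * D.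
Proof.
move=> D0 /(_ 0); rewrite enorm0 addr0 /mgrad mulmx0 addr0 => /(_ D0) [_ err].
rewrite -[grad _ _](subrK (gvec c J)) (le_trans (enormD_le _ _)) //.
by rewrite addrC lerD2l.
Qed.

Section Run.
Variables (R : realType) (n d : nat) (r : 'cV[R]_d -> 'cV[R]_n).
Variables (kef keg kH Dmax gdec ginc eta1 eta2 eta1' eps : R).
Variables (th0 : 'cV[R]_d) (D0 : R) (tr : trace R n d).
Hypothesis run : is_run r kef keg Dmax gdec ginc eta1 eta2 eta1' eps th0 D0 tr.
Hypotheses (keg_gt0 : 0 < keg) (gdec_gt0 : 0 < gdec).

Local Notation Delta k := (Delta eps gdec tr k).
Local Notation gradf k := (grad (fobj r) (th tr k)).

Lemma fp_lt_np k : (fp tr k < np tr k)%N.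
Proof. by rewrite /fp ltn_predL; case: run => _ /(_ k) []. Qed.

Lemma Dafter_ge_Din k p (X : R) : (p < np tr k)%N -> eps <= enorm (gradf k) ->
  0 < X -> X <= gdec * eps / (keg + 1) -> X <= Din eps gdec tr k p ->
  X <= Dafter eps gdec tr k p.
Proof.
move=> ltp geps X0 Xeps XD.
have -> : Dafter eps gdec tr k p = if crit eps tr k p
    then gdec ^+ ni tr k p * Din eps gdec tr k p else Din eps gdec tr k p.
  by case: p ltp XD.
case critp: (crit eps tr k p) => //.
have [_ /(_ k) [_ /(_ p ltp) [_ _ /(_ critp) [FL small _] _ _]] _ _ _] := run.
case nik: (ni tr k p) => [|i]; first by rewrite mul1r.
(* The loop did not stop at index i although the model was fully linear there,
   so eps <= |g_i| + keg D < (keg + 1) D for D = gdec^i Din. *)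
set D := gdec ^+ i * Din eps gdec tr k p.
have D_gt0 : 0 < D by rewrite mulr_gt0 ?exprn_gt0 // (lt_le_trans X0).
have /FL[_ /(fully_linear_grad_le (ltW D_gt0)) gradD] : (i <= ni tr k p)%N.
  by rewrite nik.
have /small/negP : (i < ni tr k p)%N by rewrite nik.
rewrite -ltNge -/D => gD.
have epsD : eps <= (keg + 1) * D by rewrite mulrDl mul1r; lra.
rewrite exprS -mulrA -/D (le_trans Xeps) // ler_pdivrMr ?addr_gt0 //.
by rewrite -mulrA ler_pM2l // mulrC.
Qed.

Lemma Dafter_ge k (X : R) : eps <= enorm (gradf k) -> 0 < X ->
  X <= gdec * eps / (keg + 1) -> X <= Dst tr k ->
  forall p, (p < np tr k)%N -> X <= Dafter eps gdec tr k p.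
Proof.
move=> geps X0 Xeps XD; elim=> [|p IH] ltp; apply: Dafter_ge_Din => //.
exact: IH (ltnW ltp).
Qed.

Lemma Delta_ge k (X : R) : eps <= enorm (gradf k) -> 0 < X ->
  X <= gdec * eps / (keg + 1) -> X <= Dst tr k -> X <= Delta k.
Proof. by move=> geps X0 Xeps XD; apply: Dafter_ge (fp_lt_np k). Qed.

Hypothesis HB : assumptionB eps gdec kH tr.

Local Notation gk k := (enorm (gvec (ck tr k) (Jk eps tr k))).

Lemma deck_ge k : 0 <= Delta k -> Delta k <= kH^-1 * gk k ->
  2^-1 * gk k * Delta k <= deck eps tr k.
Proof.
case: HB => _ /(_ k (fp tr k) (fp_lt_np k)) /= [dec_ge H_le] D_ge0 D_le.
move: dec_ge; rewrite -/(Jk eps tr k) -/(ck tr k) -/(Delta k) -/(deck eps tr k).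
have H_gt0 : 0 < opnorm (Hmat (Jk eps tr k)) + 1 by rewrite ltr_wpDl ?opnorm_ge0.
have kH_gt0 : 0 < kH := lt_le_trans H_gt0 H_le.
suff /min_idPl -> : Delta k <= gk k / (opnorm (Hmat (Jk eps tr k)) + 1) by [].
by rewrite (le_trans D_le) // mulrC ler_wpM2l ?sqrtr_ge0 ?lef_pV2 ?posrE.
Qed.

Variable c : R.
Hypotheses (c_gt0 : 0 < c) (c_kH : c <= kH^-1).
Hypotheses (kef_ge0 : 0 <= kef) (c_kef : c * (4 * kef) <= 1 - eta2 - 2 * eta1').
Hypothesis eta2_le1 : eta2 <= 1.

Lemma rho_ge_eta2 k : FLk r kef keg eps gdec tr k -> 0 < Delta k ->
  Delta k <= c * gk k -> eta2 <= rho eps tr k.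
Proof.
move=> FL D_gt0 D_le.
have [_ /(_ k) [_ /(_ (fp tr k) (fp_lt_np k)) [_ _ _ sk_le _]] _ _ _] := run.
have [model_err _] := FL _ sk_le.
have [_ _ /(_ k) [trial_err trial_acc] _ _] := run.
have dk_eq : deck eps tr k = sqobj (ck tr k) - mval (ck tr k) (Jk eps tr k) (sk tr k).
  by rewrite /deck /dec /mval mulmx0 addr0.
set D := Delta k in D_gt0 D_le model_err *; set g := gk k in D_le *.
set dk := deck eps tr k in trial_acc dk_eq *.
have g_gt0 : 0 < g by have := lt_le_trans D_gt0 D_le; rewrite pmulr_rgt0.
have dk_ge : 2^-1 * g * D <= dk.
  by apply: deck_ge (ltW D_gt0) (le_trans D_le _); rewrite ler_wpM2r ?sqrtr_ge0.
have dk_gt0 : 0 < dk by apply: lt_le_trans dk_ge; rewrite !mulr_gt0.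
have a_ge0 : 0 <= 1 - eta2 - 2 * eta1'.
  by rewrite (le_trans _ c_kef) // !mulr_ge0 ?(ltW c_gt0).
(* The model error kef D^2 <= kef c g D is a fraction of the Cauchy decrease g D / 2. *)
have err_le : kef * D ^+ 2 <= (1 - eta2 - 2 * eta1') / 2 * dk.
  have e1 : kef * D ^+ 2 <= kef * D * (c * g).
    by rewrite expr2 mulrA ler_wpM2l ?mulr_ge0 ?(ltW D_gt0).
  have e2 : c * (4 * kef) * (g * D) <= (1 - eta2 - 2 * eta1') * (g * D).
    by rewrite ler_wpM2r ?mulr_ge0 ?(ltW g_gt0) ?(ltW D_gt0).
  have e3 : (1 - eta2 - 2 * eta1') * (2^-1 * g * D) <= (1 - eta2 - 2 * eta1') * dk.
    by rewrite ler_wpM2l.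
  lra.
rewrite /rho -/dk ler_pdivlMr //.
move: model_err trial_err; rewrite !ler_norml => /andP[? ?] /andP[? ?].
have : 0 <= (1 - eta2) * dk by rewrite mulr_ge0 ?(ltW dk_gt0) // subr_ge0.
lra.
Qed.

Lemma Delta_gt_of_unsuccessful k : FLk r kef keg eps gdec tr k ->
  rho eps tr k < eta2 -> eps <= enorm (gradf k) -> 0 < Delta k ->
  c * eps / (keg + 1) < Delta k.
Proof.
move=> FL rho_lt geps D_gt0; rewrite ltNge; apply/negP => D_le.
move: rho_lt; rewrite ltNge => /negP; apply; apply: rho_ge_eta2 => //.
have grad_le := fully_linear_grad_le (ltW D_gt0) FL.
set g := gk k in grad_le *; set D := Delta k in D_gt0 D_le grad_le *.
have c_le1 : c <= 1.
  by case: HB => kH_ge1 _; rewrite (le_trans c_kH) // invf_le1 // (lt_le_trans ltr01).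
(* eps <= g + keg D, hence D (keg + 1) <= c eps <= c g + keg D, i.e. D <= c g. *)
have : D * (keg + 1) <= c * eps by rewrite -ler_pdivlMr ?addr_gt0.
have : c * (keg * D) <= keg * D by rewrite ger_pMl // mulr_gt0.
have : c * eps <= c * (g + keg * D) by rewrite ler_wpM2l ?(ltW c_gt0) ?(le_trans geps).
lra.
Qed.

Hypotheses (gdec_le1 : gdec <= 1) (ginc_ge1 : 1 <= ginc).

Lemma Dst_succ_ge k (L : R) : eps <= enorm (gradf k) -> 0 < L -> L <= Dmax ->
  L <= c * eps / (keg + 1) -> gdec * L <= Delta k -> gdec * L <= Dst tr k.+1.
Proof.
move=> geps L_gt0 L_Dmax L_c LD.
have gL_le : gdec * L <= L by rewrite ger_pMl.
have D_gt0 : 0 < Delta k by rewrite (lt_le_trans _ LD) ?mulr_gt0.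
have [_ _ _ /(_ k) [_ _ Dst_inc Dst_keep Dst_dec] _] := run.
have [rho_ge | rho_lt] := leP eta2 (rho eps tr k).
  rewrite Dst_inc // le_min (le_trans gL_le L_Dmax) andbT.
  by rewrite (le_trans LD) // ler_peMl // ltW.
have [FL | notFL] := pselect (FLk r kef keg eps gdec tr k); last by rewrite Dst_keep.
rewrite Dst_dec // ler_pM2l // (le_trans L_c) // ltW //.
exact: Delta_gt_of_unsuccessful.
Qed.

Lemma Dst_ge keps (L : R) : (forall k, (k <= keps)%N -> eps <= enorm (gradf k)) ->
  0 < L -> L <= D0 -> D0 <= Dmax ->
  L <= c * eps / (keg + 1) -> L <= gdec * eps / (keg + 1) ->
  forall k, (k <= keps)%N -> gdec * L <= Dst tr k.
Proof.
move=> geps L_gt0 L_D0 D0_Dmax L_c L_gdec.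
have gL_le : gdec * L <= L by rewrite ger_pMl.
have [[_ Dst0 _] _ _ _ _] := run.
elim=> [|k IH] le_k; first by rewrite Dst0 (le_trans gL_le L_D0).
have le_k' := ltnW le_k.
apply: Dst_succ_ge (le_trans L_D0 D0_Dmax) L_c _ => //; first exact: geps.
by apply: Delta_ge (IH le_k'); rewrite ?mulr_gt0 ?geps ?(le_trans gL_le).
Qed.

End Run.

Theorem lemma8 (R : realType) (n d : nat) (r : 'cV[R]_d -> 'cV[R]_n)
  (kef keg kH Dmax gdec ginc eta1 eta2 eta1' eps : R)
  (th0 : 'cV[R]_d) (D0 : R) (tr : trace R n d) (keps : nat) :
  (0 < n)%N -> (0 < d)%N ->
  0 < kef -> 0 < keg ->
  0 < Dmax -> 0 < gdec -> gdec < 1 -> 1 < ginc ->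
  0 < eta1 -> eta1 <= eta2 -> eta2 < 1 ->
  0 < eta1' -> eta1' < Num.min eta1 (1 - eta2) / 2 ->
  0 < eps -> eps < 1 ->
  0 < D0 -> D0 <= Dmax ->
  is_run r kef keg Dmax gdec ginc eta1 eta2 eta1' eps th0 D0 tr ->
  assumptionA r th0 Dmax ->
  assumptionB eps gdec kH tr ->
  (forall k, (k <= keps)%N -> eps <= enorm (grad (fobj r) (th tr k))) ->
  let c0 := Num.min ((1 - eta2 - 2 * eta1') / (4 * kef)) (1 / kH) in
  let Dmin := gdec * Num.min D0 (Num.min (c0 * eps / (keg + 1))
                                         (gdec * eps / (keg + 1))) in
  (forall k, (k <= keps)%N -> Dmin <= Delta eps gdec tr k) /\ 0 < Dmin.
Proof.
move=> _ _ kef_gt0 keg_gt0 _ gdec_gt0 gdec_lt1 ginc_gt1 _ _ eta2_lt1 _ eta1'_lt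
  eps_gt0 _ D0_gt0 D0_Dmax run _ HB geps c0 Dmin.
have a_gt0 : 0 < 1 - eta2 - 2 * eta1'.
  have : eta1' < (1 - eta2) / 2.
    by rewrite (lt_le_trans eta1'_lt) // ler_wpM2r ?invr_ge0 ?ge_min ?lexx ?orbT.
  lra.
have [kH_ge1 _] := HB.
have c0_gt0 : 0 < c0 by rewrite lt_min !divr_gt0 ?mulr_gt0 ?(lt_le_trans ltr01 kH_ge1).
have c0_kH : c0 <= kH^-1 by rewrite ge_min div1r lexx orbT.
have c0_kef : c0 * (4 * kef) <= 1 - eta2 - 2 * eta1'.
  by rewrite -ler_pdivlMr ?mulr_gt0 // ge_min lexx.
rewrite /Dmin; set T := Num.min D0 _.
have T_gt0 : 0 < T by rewrite !lt_min D0_gt0 !divr_gt0 ?mulr_gt0 ?addr_gt0.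
have [T_D0 T_c0 T_gdec] : [/\ T <= D0, T <= c0 * eps / (keg + 1)
                                      & T <= gdec * eps / (keg + 1)].
  by rewrite !ge_min !lexx !orbT.
split=> [k le_k|]; last exact: mulr_gt0.
have Dst_k := Dst_ge run keg_gt0 gdec_gt0 HB c0_gt0 c0_kH (ltW kef_gt0) c0_kef
  (ltW eta2_lt1) (ltW gdec_lt1) (ltW ginc_gt1) geps T_gt0 T_D0 D0_Dmax T_c0 T_gdec le_k.
apply: (Delta_ge run keg_gt0 gdec_gt0 (geps k le_k) _ _ Dst_k).
  exact: mulr_gt0.
by rewrite (le_trans _ T_gdec) // ger_pMl // ltW.
Qed.
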